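(* Let $X=\{1,\dots,n\}$, $Y$ finite, $Q$ a symmetric irreducible stochastic matrix on $Y$ (notation in context). Let $\underline a=(a_0,\dots,a_m)$ be a type with $a_0+\cdots+a_m=h$, and let $k$ be an integer with $\ell(\underline a)\le k\le\frac{n+\ell(\underline a)}{2}$ and $k\le h\le n+\ell(\underline a)-k$. Write $\underline a^{(r)}=(a_0-r,a_1,\dots,a_m)$. Then for every $F\in P_{k,\underline a^{(h-k)},k}$, $$\big\|D^*_{h,\underline a}D^*_{h-1,\underline a^{(1)}}\cdots D^*_{k+1,\underline a^{(h-k-1)}}F\big\|^2=\frac{(n+\ell(\underline a)-2k)!\,(h-k)!}{(n+\ell(\underline a)-k-h)!}\,|Y|^{h-k}\,\|F\|^2 .$$ In particular $D^*_{h,\underline a}D^*_{h-1,\underline a^{(1)}}\cdots D^*_{k+1,\underline a^{(h-k-1)}}$ is an isomorphism of $P_{k,\underline a^{(h-k)},k}$ onto $P_{h,\underline a,k}$.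
   Context: $Q$ acts on $L(Y)$ by $(Qf)(y)=\sum_{y'}q(y,y')f(y')$, with distinct eigenvalues $\lambda_0=1,\dots,\lambda_m$ and eigenspaces $W_0$ (constants), $W_1,\dots,W_m$. For $0\le k\le n$, $\Theta_k$ is the set of functions $\theta$ with $\mathrm{dom}(\theta)$ a $k$-subset of $X$ and values in $Y$ ($\Theta_0$ = empty function), with inner product $\langle F,G\rangle=\sum_{\theta\in\Theta_k}F(\theta)\overline{G(\theta)}$ on $L(\Theta_k)$ and norm $\|F\|^2=\langle F,F\rangle$; $\varphi\subseteq\theta$ means $\mathrm{dom}\varphi\subseteq\mathrm{dom}\theta$ and $\theta|_{\mathrm{dom}\varphi}=\varphi$. For $1\le k\le n$: $(D_kF)(\varphi)=\sum_{\theta\in\Theta_k:\theta\supseteq\varphi}F(\theta)$ and $(D_k^*F)(\theta)=\sum_{\varphi\in\Theta_{k-1}:\varphi\subseteq\theta}F(\varphi)$; $D_0:=0$. Types $\underline c=(c_0,\dots,c_m)$, $|\underline c|=\sum c_i$, $\ell(\underline c)=c_1+\cdots+c_m$, $\underline c'=(c_0-1,c_1,\dots,c_m)$. A fundamental function of type $\underline c$ on $A$, $|A|=|\underline c|$, is $F=\bigotimes_{j\in A}F^j$ ($F(\theta)=\prod_{j\in A}F^j(\theta(j))$ on $Y^A$, $0$ elsewhere) with each $F^j$ in some $W_{i_j}$ and exactly $c_i$ indices with $i_j=i$; $P_{k,\underline c,A}$ is their span, $P_{k,\underline c}=\bigoplus_{|A|=k}P_{k,\underline c,A}$. $D_{k,\underline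 c}=D_k|_{P_{k,\underline c}}$, $D^*_{k,\underline c}=D^*_k|_{P_{k-1,\underline c'}}$. For $|\underline c|=k$: $P_{k,\underline c,k}=\ker D_{k,\underline c}$; for $k<h\le n$, $|\underline c|=h$, $\ell(\underline c)\le k$: $P_{h,\underline c,k}=D^*_{h,\underline c}(P_{h-1,\underline c',k})$. For $h=k$ the composition of the $D^*$'s is the identity. *)

From HB Require Import structures.
From mathcomp Require Import all_boot all_order all_algebra all_field.
Set Implicit Arguments. Unset Strict Implicit. Unset Printing Implicit Defensive.
Import Order.TTheory GRing.Theory Num.Theory.
Local Open Scope ring_scope.

Definition Qop (Y : finType) (q : Y -> Y -> algC) (f : Y -> algC) (y : Y) : algC :=
  \sum_(y' : Y) q y y' * f y'.

Definition inW (Y : finType) (q : Y -> Y -> algC) (m : nat) (lam : 'I_m.+1 -> algC)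
  (i : 'I_m.+1) (f : Y -> algC) : Prop :=
  forall y, Qop q f y = lam i * f y.

(* Partial functions X -> Y, X = 'I_n (X = {1..n} shifted to {0..n-1}). *)
Definition pf (n : nat) (Y : finType) := {ffun 'I_n -> option Y}.
Definition dom n (Y : finType) (th : pf n Y) : {set 'I_n} := [set j | th j != None].
Definition subpf n (Y : finType) (phi th : pf n Y) : bool :=
  [forall j, (phi j != None) ==> (phi j == th j)].

(* Functions on Theta_k are represented as functions on all partial maps;
   only values on Theta_k = {theta | #|dom theta| = k} matter. *)
Definition Lfun n (Y : finType) := pf n Y -> algC.

Definition Dk n (Y : finType) (k : nat) (F : Lfun n Y) : Lfun n Y :=
  fun phi => if k is 0 then 0 else
    if #|dom phi| == k.-1 then
      \sum_(th : pf n Y | (#|dom th| == k) && subpf phi th) F th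
    else 0.

Definition Dstar n (Y : finType) (k : nat) (F : Lfun n Y) : Lfun n Y :=
  fun th => if #|dom th| == k then
      \sum_(phi : pf n Y | (#|dom phi| == k.-1) && subpf phi th) F phi
    else 0.

Definition norm2 n (Y : finType) (k : nat) (F : Lfun n Y) : algC :=
  \sum_(th : pf n Y | #|dom th| == k) F th * (F th)^*.

Definition type_size m (c : 'I_m.+1 -> nat) : nat := (\sum_(i < m.+1) c i)%N.
Definition ell m (c : 'I_m.+1 -> nat) : nat := (\sum_(i < m.+1 | i != ord0) c i)%N.
Definition shift m (r : nat) (c : 'I_m.+1 -> nat) : 'I_m.+1 -> nat :=
  fun i => if i == ord0 then (c i - r)%N else c i.

Definition tensorF n (Y : finType) (A : {set 'I_n}) (Fj : 'I_n -> Y -> algC) : Lfun n Y :=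
  fun th => if dom th == A then
      \prod_(j in A) (match th j with Some y => Fj j y | None => 0 end)
    else 0.

Section P.
Variables (Y : finType) (q : Y -> Y -> algC) (m : nat) (lam : 'I_m.+1 -> algC) (n : nat).

Definition fundamental (k : nat) (c : 'I_m.+1 -> nat) (G : Lfun n Y) : Prop :=
  exists (A : {set 'I_n}) (ij : 'I_n -> 'I_m.+1) (Fj : 'I_n -> Y -> algC),
    [/\ #|A| = k,
        (forall j, j \in A -> inW q lam (ij j) (Fj j)),
        (forall i, #|[set j in A | ij j == i]| = c i)
      & forall th, G th = tensorF A Fj th].

Definition Pspan (k : nat) (c : 'I_m.+1 -> nat) (F : Lfun n Y) : Prop :=
  exists (N : nat) (coef : 'I_N -> algC) (G : 'I_N -> Lfun n Y),
    (forall i, fundamental k c (G i)) /\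
    (forall th, F th = \sum_(i < N) coef i * G i th).

Definition Pker (k : nat) (c : 'I_m.+1 -> nat) (F : Lfun n Y) : Prop :=
  Pspan k c F /\ forall phi, Dk k F phi = 0.

(* Pgen d c k = P_{k+d, c, k}: P_{h,c,k} = D*_{h,c}(P_{h-1,c',k}) *)
Fixpoint Pgen (d : nat) (c : 'I_m.+1 -> nat) (k : nat) (F : Lfun n Y) : Prop :=
  match d with
  | 0 => Pker k c F
  | d'.+1 => exists G, Pgen d' (shift 1 c) k G /\
                       forall th, F th = Dstar (k + d'.+1) G th
  end.
End P.

Fixpoint Dstar_iter n (Y : finType) (k d : nat) (F : Lfun n Y) : Lfun n Y :=
  match d with
  | 0 => F
  | d'.+1 => Dstar (k + d'.+1) (Dstar_iter k d' F)
  end.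

(* D* raises the level of a function on partial maps and D lowers it; D is the
   adjoint of D*.  Let R be the resampling operator (change the value at one
   point of the domain, summed over all values).  On level j, if R acts as
   c0 |Y| then D D* = D* D + ((n - j) - c0) |Y|, and D* raises the R-eigenvalue
   by |Y|.  Hence for F of level k with D F = 0 the iterates G_t of D* satisfy
   D G_(t+1) = alpha_(t+1) G_t with alpha_(t+1) = sum_(s <= t) ((n-k-s) - (c0+s)) |Y|,
   and by adjointness ||G_(t+1)||^2 = alpha_(t+1) ||G_t||^2.  On fundamental
   functions of type c, R acts as c_0 |Y|, because a factor from W_0 is constant
   while a factor from W_i, i > 0, has zero sum (Q is symmetric, stochastic and
   irreducible).  For c_0 = k - ell(a) one gets alpha_(s+1) = (s+1)(n + ell(a) - 2k - s)|Y|,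
   whose product is the stated constant; it is nonzero, so D*...D* is injective. *)

From HB Require Import structures.
From mathcomp Require Import all_boot all_order all_algebra all_field.
From mathcomp Require Import ring zify.
From Stdlib Require Import FunctionalExtensionality.
Set Implicit Arguments. Unset Strict Implicit. Unset Printing Implicit Defensive.
Import Order.TTheory GRing.Theory Num.Theory.
Local Open Scope ring_scope.

Lemma sum_reindex_inj (R : nmodType) (I T : finType) (P : pred T) (A : {set I})
    (g : I -> T) (F : T -> R) :
  {in A &, injective g} -> (forall i, i \in A -> P (g i)) ->
  (forall t, P t -> exists2 i, i \in A & t = g i) ->
  \sum_(t | P t) F t = \sum_(i in A) F (g i).
Proof.
move=> g_inj gP Pg; rewrite -(big_imset _ g_inj) /=; apply: eq_bigl => t.
apply/idP/imsetP => [/Pg [i iA ->]|[i iA ->]]; [by exists i | exact: gP].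
Qed.

Section PartialFunctions.
Variables (n : nat) (Y : finType).
Implicit Types (p phi th : pf n Y) (x z : 'I_n) (y : Y).

Definition pf_upd p x y : pf n Y := [ffun j => if j == x then Some y else p j].
Definition pf_rem p z : pf n Y := [ffun j => if j == z then None else p j].

Lemma dom_upd p x y : dom (pf_upd p x y) = x |: dom p.
Proof. by apply/setP=> j; rewrite !inE ffunE; case: (j == x). Qed.

Lemma dom_rem p z : dom (pf_rem p z) = dom p :\ z.
Proof. by apply/setP=> j; rewrite !inE ffunE; case: (j == z). Qed.

Lemma dom_upd_in p x y : x \in dom p -> dom (pf_upd p x y) = dom p.
Proof. by move=> xp; rewrite dom_upd; apply/setUidPr; rewrite sub1set. Qed.

Lemma card_dom_upd p x y : x \notin dom p -> #|dom (pf_upd p x y)| = #|dom p|.+1.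
Proof. by move=> xp; rewrite dom_upd cardsU1 xp. Qed.

Lemma card_dom_rem p z j : z \in dom p -> #|dom p| = j.+1 -> #|dom (pf_rem p z)| = j.
Proof. by move=> zp; rewrite dom_rem (cardsD1 z) zp add1n => -[]. Qed.

Lemma pf_rem_upd p x y : pf_rem (pf_upd p x y) x = pf_rem p x.
Proof. by apply/ffunP=> j; rewrite !ffunE; case: eqP. Qed.

Lemma pf_upd_rem p x y : pf_upd (pf_rem p x) x y = pf_upd p x y.
Proof. by apply/ffunP=> j; rewrite !ffunE; case: eqP. Qed.

Lemma pf_rem_updC p x y z : z != x -> pf_rem (pf_upd p x y) z = pf_upd (pf_rem p z) x y.
Proof.
move=> zx; apply/ffunP=> j; rewrite !ffunE; case: (eqVneq j z) => [->|//].
by rewrite (negbTE zx).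
Qed.

Lemma pf_rem_id p x : x \notin dom p -> pf_rem p x = p.
Proof.
rewrite inE negbK => /eqP px; apply/ffunP=> j; rewrite !ffunE.
by case: eqP => // ->; rewrite px.
Qed.

Lemma pf_upd_id p z y : p z = Some y -> pf_upd p z y = p.
Proof. by move=> pz; apply/ffunP=> j; rewrite ffunE; case: eqP => // ->. Qed.

Lemma subpfP phi th : subpf phi th -> forall j, phi j != None -> phi j = th j.
Proof. by move=> /forallP H j /(implyP (H j)) /eqP. Qed.

Lemma subpf_dom phi th : subpf phi th -> dom phi \subset dom th.
Proof.
by move=> H; apply/subsetP=> j; rewrite !inE => phij; rewrite -(subpfP H phij).
Qed.

Lemma subpf_rem th z : subpf (pf_rem th z) th.
Proof. by apply/forallP=> j; apply/implyP; rewrite ffunE; case: (j == z). Qed.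

Lemma subpf_upd phi x y : x \notin dom phi -> subpf phi (pf_upd phi x y).
Proof.
move=> xphi; apply/forallP=> j; apply/implyP; rewrite ffunE.
by case: (eqVneq j x) => [->|//]; move: xphi; rewrite inE negbK => /eqP ->.
Qed.

Lemma subpf_predE phi th : subpf phi th -> #|dom th| = #|dom phi|.+1 ->
  exists2 z, z \in dom th & phi = pf_rem th z.
Proof.
move=> sub card.
have: ~~ (dom th \subset dom phi).
  by apply/negP=> /subset_leq_card; rewrite card ltnn.
case/subsetPn=> z zth zphi; exists z => //.
have dom_phi : dom phi = dom th :\ z.
  apply/eqP; rewrite eqEcard; apply/andP; split.
    apply/subsetP=> i iphi; rewrite in_setD1 (subsetP (subpf_dom sub) _ iphi) andbT.
    by apply: contraNneq zphi => <-.
  by move: card; rewrite (cardsD1 z (dom th)) zth add1n => -[->].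
apply/ffunP=> i; rewrite ffunE; case: (eqVneq i z) => [->|iz].
  by move: zphi; rewrite inE negbK => /eqP.
case: (eqVneq (phi i) None) => [phiN|]; last exact: subpfP.
have: i \notin dom phi by rewrite inE phiN.
by rewrite dom_phi !inE iz /= negbK => /eqP ->.
Qed.

Lemma sum_subpf_pred (G : Lfun n Y) th j : #|dom th| = j.+1 ->
  \sum_(phi | (#|dom phi| == j) && subpf phi th) G phi
    = \sum_(z in dom th) G (pf_rem th z).
Proof.
move=> card; apply: sum_reindex_inj.
- move=> z z' zth _ /ffunP /(_ z); rewrite !ffunE eqxx.
  by case: (eqVneq z z') => // _ thz; move: zth; rewrite inE -thz.
- by move=> z zth; rewrite (card_dom_rem zth card) eqxx subpf_rem.
- move=> phi /andP [/eqP cphi sub].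
  have [z zth ->] := subpf_predE sub (etrans card (congr1 S (esym cphi))).
  by exists z.
Qed.

Lemma sum_subpf_succ (G : Lfun n Y) phi j : #|dom phi| = j ->
  \sum_(th | (#|dom th| == j.+1) && subpf phi th) G th
    = \sum_(x | x \notin dom phi) \sum_(y : Y) G (pf_upd phi x y).
Proof.
move=> card; rewrite pair_big_dep /=.
rewrite (@sum_reindex_inj _ _ _ _ [set xy : 'I_n * Y | xy.1 \notin dom phi]
           (fun xy => pf_upd phi xy.1 xy.2)).
- by apply: eq_bigl => xy; rewrite inE andbT.
- move=> [x y] [x' y']; rewrite !inE /= => xphi _ /ffunP /(_ x); rewrite !ffunE eqxx.
  case: (eqVneq x x') => [<- [->] //|_].
  by move: xphi; rewrite negbK => /eqP ->.
- by move=> [x y]; rewrite inE /= => xphi; rewrite card_dom_upd // card eqxx subpf_upd.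
- move=> th /andP [/eqP cth sub].
  have [z zth ->] := subpf_predE sub (etrans cth (congr1 S (esym card))).
  move: (zth); rewrite inE; case thz: (th z) => [y|] // _.
  exists (z, y); first by rewrite inE dom_rem setD11.
  by rewrite /= pf_upd_rem pf_upd_id.
Qed.

End PartialFunctions.

Section Ladder.
Variables (n : nat) (Y : finType).
Implicit Types (G H F : Lfun n Y) (phi th : pf n Y).

(* On P_{k,c} this is c_0 |Y| times the identity (resample_eigen_Pspan), and it
   is the only trace of Q in the commutation relation Dk_Dstar. *)
Definition resample_sum G phi : algC :=
  \sum_(x in dom phi) \sum_(y : Y) G (pf_upd phi x y).

Definition resample_eigen (j c0 : nat) G : Prop :=
  forall phi, #|dom phi| = j -> resample_sum G phi = c0%:R * #|Y|%:R * G phi.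

Lemma DstarE j G th : #|dom th| = j.+1 ->
  Dstar j.+1 G th = \sum_(z in dom th) G (pf_rem th z).
Proof. by move=> card; rewrite /Dstar card eqxx; exact: sum_subpf_pred. Qed.

Lemma DkE j H phi : #|dom phi| = j ->
  Dk j.+1 H phi = \sum_(x | x \notin dom phi) \sum_(y : Y) H (pf_upd phi x y).
Proof. by move=> card; rewrite /Dk /= card eqxx; exact: sum_subpf_succ. Qed.

Lemma sum_constY (c : algC) : \sum_(y : Y) c = #|Y|%:R * c.
Proof. by rewrite sumr_const mulr_natl. Qed.

Lemma resample_eigen_Dstar j c0 G :
  resample_eigen j c0 G -> resample_eigen j.+1 c0.+1 (Dstar j.+1 G).
Proof.
move=> eigG th card.
have split_x x : x \in dom th -> \sum_(y : Y) Dstar j.+1 G (pf_upd th x y) =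
    #|Y|%:R * G (pf_rem th x)
    + \sum_(z in dom th | z != x) \sum_(y : Y) G (pf_upd (pf_rem th z) x y).
  move=> xth; have card_upd y : #|dom (pf_upd th x y)| = j.+1 by rewrite dom_upd_in.
  under eq_bigr => y _ do rewrite (DstarE _ (card_upd y)) (dom_upd_in y xth)
     (bigD1 x xth) /= pf_rem_upd.
  rewrite big_split /= sum_constY exchange_big /=; congr (_ + _).
  by apply: eq_bigr => z /andP [_ zx]; apply: eq_bigr => y _; rewrite pf_rem_updC.
have eig_rem z : z \in dom th ->
    \sum_(x in dom th | (z \in dom th) && (z != x))
       \sum_(y : Y) G (pf_upd (pf_rem th z) x y)
    = c0%:R * #|Y|%:R * G (pf_rem th z).
  move=> zth; rewrite -eigG ?(card_dom_rem zth card) //; apply: eq_bigl => x.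
  by rewrite dom_rem in_setD1 zth eq_sym andbC.
rewrite /resample_sum (eq_bigr _ split_x) big_split /= -mulr_sumr.
rewrite (exchange_big_dep (mem (dom th))) /=; last by move=> ? ? _ /andP [].
rewrite (eq_bigr _ eig_rem) -mulr_sumr DstarE // -addn1 natrD; ring.
Qed.

Lemma Dstar_Dk j G phi : #|dom phi| = j ->
  Dstar j (Dk j G) phi = resample_sum G phi +
   \sum_(x | x \notin dom phi) \sum_(z in dom phi) \sum_(y : Y) G (pf_upd (pf_rem phi z) x y).
Proof.
case: j => [|j] card.
  have dom0 : dom phi = set0 by apply/eqP; rewrite -cards_eq0 card.
  rewrite /Dstar card eqxx big1 // /resample_sum dom0 big_set0 add0r big1 // => x _.
  by rewrite big_set0.
have Dk_rem z : z \in dom phi -> Dk j.+1 G (pf_rem phi z) =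
    \sum_(y : Y) G (pf_upd phi z y)
    + \sum_(x | x \notin dom phi) \sum_(y : Y) G (pf_upd (pf_rem phi z) x y).
  move=> zphi; rewrite DkE ?(card_dom_rem zphi card) //.
  rewrite (bigD1 z) /=; last by rewrite dom_rem !inE eqxx.
  under eq_bigr => y _ do rewrite pf_upd_rem.
  congr (_ + _); apply: eq_bigl => x; rewrite dom_rem in_setD1.
  by case: (eqVneq x z) => [->|_]; rewrite /= ?zphi ?andbT.
by rewrite DstarE // (eq_bigr _ Dk_rem) big_split /= [in RHS]exchange_big.
Qed.

Lemma card_notin_dom phi : #|[pred x | x \notin dom phi]| = (n - #|dom phi|)%N.
Proof.
have -> : #|[pred x | x \notin dom phi]| = #|~: dom phi|.
  by apply: eq_card => x; rewrite !inE.
by rewrite cardsCs setCK card_ord.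
Qed.

Lemma Dk_Dstar j c0 G phi : resample_eigen j c0 G -> #|dom phi| = j ->
  Dk j.+1 (Dstar j.+1 G) phi =
  Dstar j (Dk j G) phi + ((n - j)%:R - c0%:R) * #|Y|%:R * G phi.
Proof.
move=> eigG card; rewrite DkE // Dstar_Dk // eigG //.
have split_x x : x \notin dom phi -> \sum_(y : Y) Dstar j.+1 G (pf_upd phi x y) =
    #|Y|%:R * G phi + \sum_(z in dom phi) \sum_(y : Y) G (pf_upd (pf_rem phi z) x y).
  move=> xphi; have card_upd y : #|dom (pf_upd phi x y)| = j.+1.
    by rewrite card_dom_upd // card.
  under eq_bigr => y _ do rewrite (DstarE _ (card_upd y)) dom_upd (big_setU1 _ xphi) /=
      pf_rem_upd (pf_rem_id xphi).
  rewrite big_split /= sum_constY exchange_big /=; congr (_ + _).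
  apply: eq_bigr => z zphi; apply: eq_bigr => y _; rewrite pf_rem_updC //.
  by apply: contraNneq xphi => <-.
rewrite (eq_bigr _ split_x) big_split /= sumr_const card_notin_dom card.
rewrite -[(_ * G phi) *+ _]mulr_natr natrB; first by ring.
by rewrite -card; have := max_card (dom phi); rewrite card_ord.
Qed.

Lemma Dstar_adjoint j G H :
  \sum_(th | #|dom th| == j.+1) Dstar j.+1 G th * (H th)^* =
  \sum_(phi | #|dom phi| == j) G phi * (Dk j.+1 H phi)^*.
Proof.
rewrite /Dstar /Dk /=.
under eq_bigr => th /eqP -> do rewrite eqxx mulr_suml.
rewrite (exchange_big_dep (fun phi => #|dom phi| == j)) /=; last by move=> ? ? _ /andP [].
by apply: eq_bigr => phi /eqP ->; rewrite eqxx rmorph_sum mulr_sumr.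
Qed.

(* Accumulates the constants of Dk_Dstar along the iterates of D* (Dk_Dstar_iter). *)
Definition DDstar_coef (k c0 t : nat) : algC :=
  \sum_(s < t) ((n - (k + s))%:R - (c0 + s)%:R) * #|Y|%:R.

Lemma conj_DDstar_coef k c0 t : (DDstar_coef k c0 t)^* = DDstar_coef k c0 t.
Proof.
rewrite rmorph_sum; apply: eq_bigr => s _.
by rewrite rmorphM rmorphB /= !conjC_nat.
Qed.

Lemma DDstar_coefS k c0 t : DDstar_coef k c0 t.+1 =
  DDstar_coef k c0 t + ((n - (k + t))%:R - (c0 + t)%:R) * #|Y|%:R.
Proof. by rewrite /DDstar_coef big_ord_recr. Qed.

Lemma DDstar_coefE k c0 t : (c0 + k + t <= n)%N ->
  DDstar_coef k c0 t.+1 = (t.+1 * (n - k - c0 - t))%:R * #|Y|%:R.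
Proof.
elim: t => [|t IH] le_n.
  by rewrite /DDstar_coef big_ord1 !addn0 mul1n subn0 -natrB //; lia.
rewrite /DDstar_coef big_ord_recr /= -/(DDstar_coef k c0 t.+1) IH; last by lia.
set N := (n - k - c0 - t.+1)%N.
have -> : (n - k - c0 - t = N.+1)%N by rewrite /N; lia.
have -> : (n - (k + t.+1) = N + c0)%N by rewrite /N; lia.
by rewrite !natrM !natrD; ring.
Qed.

Lemma prod_DDstar_coef k c0 d : (c0 + k + d <= n.+1)%N ->
  \prod_(s < d) DDstar_coef k c0 s.+1 = (d`! * (n - k - c0) ^_ d)%:R * (#|Y| ^ d)%:R.
Proof.
elim: d => [|d IH] le_n; first by rewrite big_ord0 mul1r.
rewrite big_ord_recr /= IH ?DDstar_coefE; [|lia..].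
by rewrite ffactnSr factS expnS !natrM; ring.
Qed.

Lemma Dstar0 j G th : (forall phi, G phi = 0) -> Dstar j G th = 0.
Proof. by move=> G0; rewrite /Dstar; case: ifP => // _; rewrite big1. Qed.

Lemma Dstar_iterS k t F : Dstar_iter k t.+1 F = Dstar (k + t).+1 (Dstar_iter k t F).
Proof. by rewrite /= addnS. Qed.

Lemma resample_eigen_Dstar_iter k c0 t F :
  resample_eigen k c0 F -> resample_eigen (k + t) (c0 + t) (Dstar_iter k t F).
Proof.
move=> eigF; elim: t => [|t IH]; first by rewrite !addn0.
by rewrite Dstar_iterS !addnS; exact: resample_eigen_Dstar.
Qed.

Section LoweringKernel.
Variables (k c0 : nat) (F : Lfun n Y).
Hypotheses (eigF : resample_eigen k c0 F) (DkF : forall phi, Dk k F phi = 0).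

Lemma Dk_Dstar_iter t phi : #|dom phi| = (k + t)%N ->
  Dk (k + t).+1 (Dstar_iter k t.+1 F) phi = DDstar_coef k c0 t.+1 * Dstar_iter k t F phi.
Proof.
elim: t phi => [|t IH] phi card.
  rewrite Dstar_iterS !addn0 (Dk_Dstar eigF); last by rewrite card addn0.
  rewrite Dstar0 // add0r.
  by rewrite /DDstar_coef big_ord1 !addn0.
rewrite Dstar_iterS (Dk_Dstar (resample_eigen_Dstar_iter (t := t.+1) eigF)) //.
have card' : #|dom phi| = (k + t).+1 by rewrite card addnS.
rewrite addnS (DstarE _ card') (eq_bigr _ (fun z zphi => IH _ (card_dom_rem zphi card'))).
rewrite -mulr_sumr -(DstarE _ card') -Dstar_iterS.
by rewrite [DDstar_coef _ _ t.+2]DDstar_coefS -addnS [RHS]mulrDl.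
Qed.

Lemma norm2_Dstar_iter t :
  norm2 (k + t) (Dstar_iter k t F) = (\prod_(s < t) DDstar_coef k c0 s.+1) * norm2 k F.
Proof.
elim: t => [|t IH]; first by rewrite addn0 big_ord0 mul1r.
rewrite {1}/norm2 addnS.
under eq_bigr => th _ do rewrite {1}Dstar_iterS.
rewrite Dstar_adjoint.
under eq_bigr => phi /eqP card do
  rewrite (Dk_Dstar_iter card) rmorphM /= conj_DDstar_coef mulrCA.
by rewrite -mulr_sumr -/(norm2 _ _) IH big_ord_recr /= mulrCA mulrA.
Qed.

End LoweringKernel.

Lemma norm2_eq0 j H : norm2 j H = 0 -> forall th, #|dom th| = j -> H th = 0.
Proof.
move=> H0 th card.
have /eqP := psumr_eq0P (fun p _ => mul_conjC_ge0 (H p)) H0 (introT eqP card).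
by rewrite mul_conjC_eq0 => /eqP.
Qed.

Lemma Dstar_ext j G H : (forall th, G th = H th) -> forall th, Dstar j G th = Dstar j H th.
Proof. by move=> eqGH th; rewrite /Dstar; case: ifP => // _; apply: eq_bigr. Qed.

Lemma Dstar_sub j G H th : Dstar j (fun p => G p - H p) th = Dstar j G th - Dstar j H th.
Proof. by rewrite /Dstar; case: ifP => _; rewrite ?subr0 // sumrB. Qed.

Lemma Dstar_iter_sub k t G H th :
  Dstar_iter k t (fun p => G p - H p) th = Dstar_iter k t G th - Dstar_iter k t H th.
Proof. by elim: t th => [|t IH] th //=; rewrite (Dstar_ext _ IH) Dstar_sub. Qed.

Lemma Dk_sub j G H phi : Dk j (fun p => G p - H p) phi = Dk j G phi - Dk j H phi.
Proof. by case: j => [|j]; rewrite /Dk ?subr0 //; case: ifP => _; rewrite ?subr0 // sumrB. Qed.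

Lemma resample_eigen_sub j c0 G H : resample_eigen j c0 G -> resample_eigen j c0 H ->
  resample_eigen j c0 (fun p => G p - H p).
Proof.
move=> eigG eigH phi card; rewrite mulrBr -eigG // -eigH // /resample_sum -sumrB.
by apply: eq_bigr => x _; rewrite sumrB.
Qed.

Lemma Dstar_iter_inj k c0 t F G :
  resample_eigen k c0 F -> resample_eigen k c0 G ->
  (forall phi, Dk k F phi = 0) -> (forall phi, Dk k G phi = 0) ->
  \prod_(s < t) DDstar_coef k c0 s.+1 != 0 ->
  (forall th, Dstar_iter k t F th = Dstar_iter k t G th) ->
  forall th, #|dom th| = k -> F th = G th.
Proof.
move=> eigF eigG DkF DkG coef_neq0 eqFG th card.
pose H p := F p - G p.
have DkH phi : Dk k H phi = 0 by rewrite Dk_sub DkF DkG subrr.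
have normH0 : norm2 (k + t) (Dstar_iter k t H) = 0.
  by rewrite /norm2 big1 // => p _; rewrite Dstar_iter_sub eqFG subrr mul0r.
move: normH0; rewrite (norm2_Dstar_iter (resample_eigen_sub eigF eigG) DkH).
move/eqP; rewrite mulf_eq0 (negbTE coef_neq0) /= => /eqP /norm2_eq0 /(_ th card).
by move/eqP; rewrite subr_eq0 => /eqP.
Qed.

End Ladder.

Section MarkovOperator.
Variables (Y : finType) (q : Y -> Y -> algC).
Hypotheses (q_sym : forall y y', q y y' = q y' y)
           (q_stoch : forall y, \sum_(y' : Y) q y y' = 1).
Implicit Types (f : Y -> algC).

Lemma sum_qC (g : Y -> Y -> algC) :
  \sum_(y : Y) \sum_(y' : Y) q y y' * g y y' = \sum_(y : Y) \sum_(y' : Y) q y y' * g y' y.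
Proof. by rewrite exchange_big; apply: eq_bigr => y _; apply: eq_bigr => y' _; rewrite q_sym. Qed.

Lemma sum_Qop f : \sum_(y : Y) Qop q f y = \sum_(y : Y) f y.
Proof.
rewrite /Qop (sum_qC (fun _ y' => f y')); apply: eq_bigr => y _.
by rewrite -mulr_suml q_stoch mul1r.
Qed.

Lemma eigen_sum_eq0 mu f : mu != 1 -> (forall y, Qop q f y = mu * f y) ->
  \sum_(y : Y) f y = 0.
Proof.
move=> mu_neq1 eig_f.
have sum_eig : \sum_(y : Y) Qop q f y = mu * \sum_(y : Y) f y.
  by rewrite mulr_sumr; apply: eq_bigr => y _; rewrite eig_f.
have : (mu - 1) * \sum_(y : Y) f y = 0 by rewrite mulrBl mul1r -sum_eig sum_Qop subrr.
by move/eqP; rewrite mulf_eq0 subr_eq0 (negbTE mu_neq1) => /eqP.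
Qed.

Lemma harmonic_energy f : (forall y, Qop q f y = f y) ->
  \sum_(y : Y) \sum_(y' : Y) q y y' * ((f y - f y') * (f y - f y')^*) = 0.
Proof.
move=> harm_f.
pose S := \sum_(y : Y) f y * (f y)^*.
have diag : \sum_(y : Y) \sum_(y' : Y) q y y' * (f y * (f y)^*) = S.
  by apply: eq_bigr => y _; rewrite -mulr_suml q_stoch mul1r.
have cross : \sum_(y : Y) \sum_(y' : Y) q y y' * (f y' * (f y)^*) = S.
  apply: eq_bigr => y _; rewrite -(harm_f y) /Qop mulr_suml.
  by apply: eq_bigr => y' _; rewrite mulrA.
transitivity (\sum_(y : Y) \sum_(y' : Y) (q y y' * (f y * (f y)^*) + q y y' * (f y' * (f y')^*))
  - \sum_(y : Y) \sum_(y' : Y) (q y y' * (f y' * (f y)^*) + q y y' * (f y * (f y')^*))).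
  rewrite -sumrB; apply: eq_bigr => y _; rewrite -sumrB; apply: eq_bigr => y' _.
  by rewrite rmorphB /=; ring.
rewrite !(eq_bigr _ (fun y _ => big_split _ _ _ _ _)) !big_split /=.
rewrite -(sum_qC (fun y _ => f y * (f y)^*)) -(sum_qC (fun y y' => f y' * (f y)^*)).
by rewrite diag cross subrr.
Qed.

Hypotheses (q_ge0 : forall y y', 0 <= q y y')
           (q_irr : forall y y', connect [rel x x' | q x x' != 0] y y').

Lemma harmonic_const f : (forall y, Qop q f y = f y) -> forall y y', f y = f y'.
Proof.
move=> harm_f.
have energy_ge0 y y' : 0 <= q y y' * ((f y - f y') * (f y - f y')^*).
  by rewrite mulr_ge0 ?mul_conjC_ge0.
have edge y y' : q y y' != 0 -> f y = f y'.
  move=> q_neq0.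
  have row0 := psumr_eq0P (fun y _ => sumr_ge0 _ (fun y' _ => energy_ge0 y y'))
                 (harmonic_energy harm_f) (i := y) isT.
  have /eqP := psumr_eq0P (fun y' _ => energy_ge0 y y') row0 (i := y') isT.
  by rewrite mulf_eq0 (negbTE q_neq0) mul_conjC_eq0 subr_eq0 => /eqP.
move=> y y'.
have closed_f : closed [rel x x' | q x x' != 0] [pred z | f z == f y].
  by move=> x x' /= /edge eq_f; rewrite !inE eq_f.
by have := closed_connect closed_f (q_irr y y'); rewrite !inE eqxx => /esym /eqP.
Qed.

End MarkovOperator.

Section Tensor.
Variables (n : nat) (Y : finType) (A : {set 'I_n}) (Fj : 'I_n -> Y -> algC).

Definition tensor_factor (p : pf n Y) (j : 'I_n) : algC :=
  if p j is Some y then Fj j y else 0.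

Lemma tensorF_split (p : pf n Y) x : dom p = A -> x \in A ->
  tensorF A Fj p = tensor_factor p x * \prod_(j in A | j != x) tensor_factor p j.
Proof. by move=> domp xA; rewrite /tensorF domp eqxx (bigD1 x xA). Qed.

Lemma sum_tensorF_upd (phi : pf n Y) x : dom phi = A -> x \in A ->
  \sum_(y : Y) tensorF A Fj (pf_upd phi x y)
    = (\sum_(y : Y) Fj x y) * \prod_(j in A | j != x) tensor_factor phi j.
Proof.
move=> domphi xA; rewrite mulr_suml; apply: eq_bigr => y _.
rewrite (tensorF_split (x := x)) ?dom_upd_in ?domphi // /tensor_factor ffunE eqxx.
by congr (_ * _); apply: eq_bigr => j /andP [_ jx]; rewrite ffunE (negbTE jx).
Qed.

End Tensor.

Section Fundamental.
Variables (Y : finType) (q : Y -> Y -> algC) (m : nat) (lam : 'I_m.+1 -> algC) (n : nat).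
Hypotheses (q_ge0 : forall y y', 0 <= q y y') (q_sym : forall y y', q y y' = q y' y)
           (q_stoch : forall y, \sum_(y' : Y) q y y' = 1)
           (q_irr : forall y y', connect [rel x x' | q x x' != 0] y y')
           (lam_inj : injective lam) (lam0 : lam ord0 = 1).

(* Summing over the value at one coordinate multiplies a factor from W_0 (the
   constants) by |Y| and kills a factor from W_i, i > 0. *)
Lemma resample_sum_fundamental k c G : fundamental q lam k c G ->
  forall phi : pf n Y, resample_sum G phi = (c ord0)%:R * #|Y|%:R * G phi.
Proof.
move=> [A [ij [Fj [_ eigFj count_ij /functional_extensionality ->]]]] phi.
case: (eqVneq (dom phi) A) => [domphi|domphi]; last first.
  rewrite {2}/tensorF (negbTE domphi) mulr0 /resample_sum big1 // => x xphi.
  by rewrite big1 // => y _; rewrite /tensorF dom_upd_in // (negbTE domphi).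
have sum_x x : x \in dom phi -> \sum_(y : Y) tensorF A Fj (pf_upd phi x y) =
    if ij x == ord0 then #|Y|%:R * tensorF A Fj phi else 0.
  move=> xphi; have xA : x \in A by rewrite -domphi.
  rewrite sum_tensorF_upd // (tensorF_split _ domphi xA).
  case: (eqVneq (ij x) ord0) => [ij0|ij_neq0].
    have harm y : Qop q (Fj x) y = Fj x y by rewrite (eigFj x xA) ij0 lam0 mul1r.
    move: xphi; rewrite inE /tensor_factor; case: (phi x) => [y0|] // _.
    rewrite (eq_bigr (fun _ => Fj x y0)) => [|y _]; last first.
      exact: (harmonic_const q_sym q_stoch q_ge0 q_irr).
    by rewrite sum_constY mulrA.
  rewrite (eigen_sum_eq0 q_sym q_stoch _ (eigFj x xA)) ?mul0r //.
  by apply: contra_neq ij_neq0; rewrite -lam0 => /lam_inj.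
rewrite /resample_sum (eq_bigr _ sum_x) -big_mkcondr /= sumr_const.
rewrite -[LHS]mulr_natl mulrA -count_ij; congr (_%:R * _ * _).
by apply: eq_card => x; rewrite !inE domphi.
Qed.

Lemma resample_eigen_Pspan k c (F : Lfun n Y) :
  Pspan q lam k c F -> resample_eigen k (c ord0) F.
Proof.
move=> [N [coef [G [fundG /functional_extensionality ->]]]] phi _.
transitivity (\sum_(i < N) coef i * resample_sum (G i) phi).
  rewrite /resample_sum /=; under eq_bigr => x _ do rewrite exchange_big.
  rewrite exchange_big; apply: eq_bigr => i _; rewrite mulr_sumr.
  by apply: eq_bigr => x _; rewrite mulr_sumr.
rewrite mulr_sumr; apply: eq_bigr => i _.
by rewrite (resample_sum_fundamental (fundG i)) mulrCA.
Qed.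

Lemma Pspan_supp k c (F : Lfun n Y) th : Pspan q lam k c F -> #|dom th| != k -> F th = 0.
Proof.
move=> [N [coef [G [fundG ->]]]] card; rewrite big1 // => i _.
have [A [ij [Fj [cardA _ _ ->]]]] := fundG i.
rewrite /tensorF; case: eqP => [domth|_]; last by rewrite mulr0.
by rewrite domth cardA eqxx in card.
Qed.

End Fundamental.

Lemma shift0 m (c : 'I_m.+1 -> nat) : shift 0 c = c.
Proof. by apply: functional_extensionality => i; rewrite /shift subn0; case: (i == ord0). Qed.

Lemma shift_shift1 m d (c : 'I_m.+1 -> nat) : shift d (shift 1 c) = shift d.+1 c.
Proof.
apply: functional_extensionality => i; rewrite /shift.
by case: (i == ord0); rewrite // -subnDA add1n.
Qed.

Lemma shift_ord0 m d (c : 'I_m.+1 -> nat) : shift d c ord0 = (c ord0 - d)%N.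
Proof. by rewrite /shift eqxx. Qed.

Lemma type_size_ell m (c : 'I_m.+1 -> nat) : type_size c = (c ord0 + ell c)%N.
Proof. by rewrite /type_size (bigD1 ord0). Qed.

Lemma Pgen_Dstar_iter (Y : finType) (q : Y -> Y -> algC) m (lam : 'I_m.+1 -> algC) n d
    c k (G : Lfun n Y) :
  Pgen q lam d c k G <->
  exists F, Pker q lam k (shift d c) F /\ forall th, G th = Dstar_iter k d F th.
Proof.
elim: d c G => [|d IH] c G /=.
  rewrite shift0; split=> [kerG|[F [kerF /functional_extensionality ->]]] //.
  by exists G.
split=> [[G' [genG' /functional_extensionality ->]]|[F [kerF eqG]]].
  have [F [kerF /functional_extensionality ->]] := (IH _ _).1 genG'.
  by exists F; rewrite -shift_shift1.
exists (Dstar_iter k d F); split => //.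
by apply/IH; exists F; rewrite shift_shift1.
Qed.

Theorem proposition7p11 (n : nat) (Y : finType) (q : Y -> Y -> algC)
  (m : nat) (lam : 'I_m.+1 -> algC)
  (hq0 : forall y y', 0 <= q y y')
  (hsym : forall y y', q y y' = q y' y)
  (hstoch : forall y, \sum_(y' : Y) q y y' = 1)
  (hirr : forall y y', connect [rel x x' | q x x' != 0] y y')
  (hlam_inj : injective lam) (hlam0 : lam ord0 = 1)
  (hlam_eig : forall i, exists f : Y -> algC,
       (exists y, f y != 0) /\ inW q lam i f)
  (hlam_all : forall (mu : algC) (f : Y -> algC), (exists y, f y != 0) ->
       (forall y, Qop q f y = mu * f y) -> exists i, mu = lam i)
  (a : 'I_m.+1 -> nat) (h k : nat)
  (ha : type_size a = h)
  (hk1 : (ell a <= k)%N) (hk2 : (2 * k <= n + ell a)%N)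
  (hh1 : (k <= h)%N) (hh2 : (h <= n + ell a - k)%N) :
  (forall F : Lfun n Y, Pker q lam k (shift (h - k) a) F ->
     norm2 h (Dstar_iter k (h - k) F) =
       ((n + ell a - 2 * k)`!%:R * (h - k)`!%:R / (n + ell a - k - h)`!%:R)
       * (#|Y| ^ (h - k))%:R * norm2 k F)
  /\ (forall F G : Lfun n Y,
        Pker q lam k (shift (h - k) a) F -> Pker q lam k (shift (h - k) a) G ->
        (forall th, Dstar_iter k (h - k) F th = Dstar_iter k (h - k) G th) ->
        forall th, F th = G th)
  /\ (forall G : Lfun n Y,
        Pgen q lam (h - k) a k G <->
        exists F, Pker q lam k (shift (h - k) a) F /\
                  forall th, G th = Dstar_iter k (h - k) F th).
Proof.
set N := (n + ell a - 2 * k)%N; set d := (h - k)%N.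
have c0E : shift d a ord0 = (k - ell a)%N.
  by rewrite shift_ord0; move: ha; rewrite type_size_ell; lia.
have eig_ker (F : Lfun n Y) : Pker q lam k (shift d a) F -> resample_eigen k (k - ell a) F.
  move=> [spanF _]; rewrite -c0E.
  exact: (resample_eigen_Pspan hq0 hsym hstoch hirr hlam_inj hlam0 spanF).
have coefE : \prod_(s < d) DDstar_coef n Y k (k - ell a) s.+1 =
    (d`! * N ^_ d)%:R * (#|Y| ^ d)%:R.
  by rewrite prod_DDstar_coef; [congr ((_ * _ ^_ _)%:R * _); lia | lia].
have coef_neq0 : \prod_(s < d) DDstar_coef n Y k (k - ell a) s.+1 != 0.
  have [_ [[y _] _]] := hlam_eig ord0.
  rewrite coefE mulf_eq0 !pnatr_eq0 muln_eq0 !negb_or -!lt0n fact_gt0 ffact_gt0 expn_gt0.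
  have Y_gt0 : (0 < #|Y|)%N by apply/card_gt0P; exists y.
  by rewrite Y_gt0 orTb andbT; lia.
split; [|split].
- move=> F kerF; have := norm2_Dstar_iter (eig_ker F kerF) kerF.2 d.
  rewrite subnKC // coefE => ->.
  have -> : (n + ell a - k - h = N - d)%N by lia.
  rewrite -(ffact_fact (_ : d <= N)%N); last by lia.
  have fact_neq0 : ((N - d)`!%:R : algC) != 0 by rewrite pnatr_eq0 -lt0n fact_gt0.
  by rewrite !natrM; field.
- move=> F G kerF kerG eqFG th.
  case: (eqVneq #|dom th| k) => [card|card]; last first.
    by rewrite (Pspan_supp kerF.1 card) (Pspan_supp kerG.1 card).
  exact: (Dstar_iter_inj (eig_ker F kerF) (eig_ker G kerG) kerF.2 kerG.2 coef_neq0 eqFG).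
- by move=> G; exact: Pgen_Dstar_iter.
Qed.
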